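(* Let $V=V(\alpha_1)\otimes\cdots\otimes V(\alpha_d)$ be a standard $U_q(\widehat{\mathfrak{sl}}_2)$-module with feasible diameter $d\ge1$. Let $\zeta_1$ be the scalar by which $LR$ acts on $U_0$ and $\zeta_1^\times$ the scalar by which $RL$ acts on $U_d$. Then (i) $\zeta_1=uu^*q^{-1}\sum_{i=1}^d\alpha_i+vv^*q^3\sum_{i=1}^d\alpha_i^{-1}-(q-q^{-1})(q^d-q^{-d})(bb^*q^{1-d}+cc^*q^{d-1})$; (ii) $\zeta_1^\times=uu^*q^{-1}\sum_{i=1}^d\alpha_i+vv^*q^3\sum_{i=1}^d\alpha_i^{-1}-(q-q^{-1})(q^d-q^{-d})(bb^*q^{d-1}+cc^*q^{1-d})$; (iii) $\zeta_1-\zeta_1^\times=(q-q^{-1})(q^{d-1}-q^{1-d})(q^d-q^{-d})(bb^*-cc^* )$.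
   Context: Let $\mathbb F$ be an algebraically closed field and fix nonzero $q\in\mathbb F$ with $q^2\ne1$; write $[n]_q=(q^n-q^{-n})/(q-q^{-1})$. $U_q(\widehat{\mathfrak{sl}}_2)$ is the associative unital $\mathbb F$-algebra with generators $e_i^{\pm},K_i^{\pm1}$ ($i\in\{0,1\}$) and relations $K_iK_i^{-1}=K_i^{-1}K_i=1$, $K_0K_1=K_1K_0$, $K_ie_i^{\pm}K_i^{-1}=q^{\pm2}e_i^{\pm}$, $K_ie_j^{\pm}K_i^{-1}=q^{\mp2}e_j^{\pm}$ ($i\ne j$), $e_i^+e_i^--e_i^-e_i^+=(K_i-K_i^{-1})/(q-q^{-1})$, $e_0^{\pm}e_1^{\mp}=e_1^{\mp}e_0^{\pm}$, and $(e_i^\pm)^3e_j^\pm-[3]_q(e_i^\pm)^2e_j^\pm e_i^\pm+[3]_qe_i^\pm e_j^\pm(e_i^\pm)^2-e_j^\pm(e_i^\pm)^3=0$ ($i\ne j$). Tensor products of modules are formed via $e_i^+(v\otimes w)=e_i^+v\otimes K_iw+v\otimes e_i^+w$, $e_i^-(v\otimes w)=e_i^-v\otimes w+K_i^{-1}v\otimes e_i^-w$, $K_i(v\otimes w)=K_iv\otimes K_iw$. For nonzero $\alpha\in\mathbb F$, $V(\alpha)$ is the module with basis $x,y$ and $K_1x=qx$, $K_1y=q^{-1}y$, $e_1^-x=y$, $e_1^-y=0$, $e_1^+x=0$, $e_1^+y=x$, $K_0x=q^{-1}x$, $K_0y=qy$, $e_0^-x=0$, $e_0^-y=q\alpha^{-1}x$,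 $e_0^+x=q^{-1}\alpha y$, $e_0^+y=0$. A standard module of diameter $d$ is $V(\alpha_1)\otimes\cdots\otimes V(\alpha_d)$ with all $\alpha_i\in\mathbb F$ nonzero. An integer $d$ is feasible if $d\ge0$ and $q^{2i}\ne1$ for $1\le i\le d$. For a standard $V$ of diameter $d$, $U_0$ is the $1$-dimensional span of $x\otimes\cdots\otimes x$ and $U_d$ the $1$-dimensional span of $y\otimes\cdots\otimes y$. Fix nonzero $b,c,b^*,c^*\in\mathbb F$ and $u,v,u^*,v^*\in\mathbb F$ with $uv^*=-bb^*q^{-1}(q-q^{-1})^2$ and $vu^*=-cc^*q^{-1}(q-q^{-1})^2$; set $R=ue_0^++ve_1^-K_1$ and $L=u^*e_1^++v^*e_0^-K_0$. ($LR$ maps $U_0$ into itself and $RL$ maps $U_d$ into itself.) *)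

From HB Require Import structures.
From mathcomp Require Import all_boot all_order all_algebra.
Set Implicit Arguments. Unset Strict Implicit. Unset Printing Implicit Defensive.
Import Order.TTheory GRing.Theory Num.Theory.
Local Open Scope ring_scope.

Section Uq.
Variable F : fieldType.

(* Kronecker (tensor) product of matrices: the basis of F^m (x) F^p is indexed
   by pairs ('I_m * 'I_p), enumerated and cast into 'I_(m * p). *)
Definition pidx m p (k : 'I_(m * p)) : 'I_m * 'I_p :=
  enum_val (cast_ord (esym (mxvec_cast m p)) k).

Definition kron m n p r (A : 'M[F]_(m, n)) (B : 'M[F]_(p, r)) : 'M[F]_(m * p, n * r) :=
  \matrix_(k, l) (A (pidx k).1 (pidx l).1 * B (pidx k).2 (pidx l).2).

(* A finite-dimensional U_q(sl2^) module on F^n, given by the matrices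
   (acting on column vectors) of e_0^+, e_0^-, e_1^+, e_1^-, K_0, K_1,
   K_0^{-1}, K_1^{-1}. *)
Record umod (n : nat) := UMod {
  E0p : 'M[F]_n; E0m : 'M[F]_n; E1p : 'M[F]_n; E1m : 'M[F]_n;
  K0 : 'M[F]_n; K1 : 'M[F]_n; K0i : 'M[F]_n; K1i : 'M[F]_n }.

Definition tens m n (M : umod m) (N : umod n) : umod (m * n) :=
  UMod (kron (E0p M) (K0 N) + kron 1%:M (E0p N))
       (kron (E0m M) 1%:M + kron (K0i M) (E0m N))
       (kron (E1p M) (K1 N) + kron 1%:M (E1p N))
       (kron (E1m M) 1%:M + kron (K1i M) (E1m N))
       (kron (K0 M) (K0 N)) (kron (K1 M) (K1 N))
       (kron (K0i M) (K0i N)) (kron (K1i M) (K1i N)).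

Definition triv : umod 1 := UMod 0 0 0 0 1%:M 1%:M 1%:M 1%:M.

(* 2x2 matrix with entries a b / c d (row, column), basis x = index 0, y = index 1 *)
Definition mx2 (a b c e : F) : 'M[F]_2 :=
  \matrix_(i, j) (if (i == 0 :> nat) then (if (j == 0 :> nat) then a else b)
                  else (if (j == 0 :> nat) then c else e)).

Definition Valpha (q alpha : F) : umod 2 :=
  UMod (mx2 0 0 (q^-1 * alpha) 0)   (* e0+ x = q^-1 alpha y, e0+ y = 0 *)
       (mx2 0 (q * alpha^-1) 0 0)   (* e0- x = 0, e0- y = q alpha^-1 x *)
       (mx2 0 1 0 0)                (* e1+ x = 0, e1+ y = x *)
       (mx2 0 0 1 0)                (* e1- x = y, e1- y = 0 *)
       (mx2 q^-1 0 0 q)             (* K0 x = q^-1 x, K0 y = q y *)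
       (mx2 q 0 0 q^-1)             (* K1 x = q x, K1 y = q^-1 y *)
       (mx2 q 0 0 q^-1)
       (mx2 q^-1 0 0 q).

Fixpoint dimV (d : nat) : nat := if d is d'.+1 then (dimV d' * 2)%N else 1%N.

Fixpoint stdmod (q : F) (alpha : nat -> F) (d : nat) : umod (dimV d) :=
  if d is d'.+1 then tens (stdmod q alpha d') (Valpha q (alpha d)) else triv.

Definition x2 : 'cV[F]_2 := \col_i (if (i == 0 :> nat) then 1 else 0).
Definition y2 : 'cV[F]_2 := \col_i (if (i == 0 :> nat) then 0 else 1).

Fixpoint xvec (d : nat) : 'cV[F]_(dimV d) :=
  if d is d'.+1 then kron (xvec d') x2 else 1%:M.
Fixpoint yvec (d : nat) : 'cV[F]_(dimV d) :=
  if d is d'.+1 then kron (yvec d') y2 else 1%:M.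

Definition Rop n (M : umod n) (u v : F) : 'M[F]_n := u *: E0p M + v *: (E1m M *m K1 M).
Definition Lop n (M : umod n) (us vs : F) : 'M[F]_n := us *: E1p M + vs *: (E0m M *m K0 M).

End Uq.

(* Call a vector v of a module "extremal of weight k with parameters P, T"
   when K_0, K_1 act on v by q^-k, q^k, e_1^+ v = e_0^- v = 0, the words
   e_1^+ e_0^+, e_1^+ e_1^-, e_0^- e_0^+, e_0^- e_1^- map v to P v, [k]_q v,
   [k]_q v, T v, and e_0^+ v, e_1^- v have K_0-eigenvalue q^(2-k).  Expanding
   LR = (u* e_1^+ + v* e_0^- K_0)(u e_0^+ + v e_1^- K_1) shows that LR acts on
   such a v by an explicit scalar (extremal_LR).  Extremality is preserved by
   tensor products, weights and parameters adding (extremal_tens), and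
   x in V(alpha) is extremal of weight 1; hence x (x) ... (x) x is extremal
   in V of weight d with P = q^-1 sum alpha_i, T = q sum alpha_i^-1.
   The diagram automorphism exchanging the indices 0 and 1 turns RL into the
   LR of the swapped module, in which y (x) ... (x) y is extremal with the
   same data (extremal_stdmod); so both eigenvalues come from one formula,
   which the constraints on u v* and v u* put in closed form
   (lr_value_closed).  Part (iii) is then a ring identity. *)

From mathcomp Require Import all_boot all_order all_algebra.
From mathcomp Require Import ring.
Import GRing.Theory.
Set Implicit Arguments. Unset Strict Implicit. Unset Printing Implicit Defensive.
Local Open Scope ring_scope.

Section Kronecker.
Variable F : fieldType.

Lemma pidx_mxvec_index m p (i : 'I_m) (j : 'I_p) :
  pidx (mxvec_index i j) = (i, j).
Proof. by rewrite /pidx /mxvec_index cast_ordK enum_rankK. Qed.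

Lemma kronE m n p r (A : 'M[F]_(m, n)) (B : 'M[F]_(p, r)) i j i' j' :
  kron A B (mxvec_index i j) (mxvec_index i' j') = A i i' * B j j'.
Proof. by rewrite /kron mxE !pidx_mxvec_index. Qed.

Lemma kron_mul m n p r s t (A : 'M[F]_(m, n)) (B : 'M[F]_(p, r))
    (C : 'M[F]_(n, s)) (D : 'M[F]_(r, t)) :
  kron A B *m kron C D = kron (A *m C) (B *m D).
Proof.
apply/matrixP => k l.
case/mxvec_indexP: k => i j; case/mxvec_indexP: l => i' j'.
rewrite kronE !mxE (reindex (uncurry (@mxvec_index n r))) /=; last first.
  by apply/onW_bij/onT_bij/curry_mxvec_bij.
rewrite big_distrl /=.
under [RHS]eq_bigr do rewrite big_distrr.
rewrite pair_bigA /=; apply: eq_bigr => -[a b] _ /=.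
by rewrite !kronE mulrACA.
Qed.

Lemma kron_mulv m n p r (A : 'M[F]_(m, n)) (B : 'M[F]_(p, r))
    (v : 'cV[F]_n) (w : 'cV[F]_r) :
  kron A B *m (kron v w : 'cV_(n * r)) = (kron (A *m v) (B *m w) : 'cV_(m * p)).
Proof. exact: (@kron_mul m n p r 1 1). Qed.

Lemma kronDl m n p r (A A' : 'M[F]_(m, n)) (B : 'M[F]_(p, r)) :
  kron (A + A') B = kron A B + kron A' B.
Proof. by apply/matrixP => k l; rewrite !mxE mulrDl. Qed.

Lemma kronDr m n p r (A : 'M[F]_(m, n)) (B B' : 'M[F]_(p, r)) :
  kron A (B + B') = kron A B + kron A B'.
Proof. by apply/matrixP => k l; rewrite !mxE mulrDr. Qed.

Lemma kronZl m n p r a (A : 'M[F]_(m, n)) (B : 'M[F]_(p, r)) :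
  kron (a *: A) B = a *: kron A B.
Proof. by apply/matrixP => k l; rewrite !mxE mulrA. Qed.

Lemma kronZr m n p r a (A : 'M[F]_(m, n)) (B : 'M[F]_(p, r)) :
  kron A (a *: B) = a *: kron A B.
Proof. by apply/matrixP => k l; rewrite !mxE mulrCA. Qed.

Lemma kron0l m n p r (B : 'M[F]_(p, r)) : kron (0 : 'M[F]_(m, n)) B = 0.
Proof. by apply/matrixP => k l; rewrite !mxE mul0r. Qed.

Lemma kron0r m n p r (A : 'M[F]_(m, n)) : kron A (0 : 'M[F]_(p, r)) = 0.
Proof. by apply/matrixP => k l; rewrite !mxE mulr0. Qed.

Lemma kron_neq0 m p (v : 'cV[F]_m) (w : 'cV[F]_p) :
  v != 0 -> w != 0 -> kron v w != 0.
Proof.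
have entry_neq0 n (x : 'cV[F]_n) : x != 0 -> exists i, x i 0 != 0.
  move=> /eqP x_neq0; case: (pickP (fun i => x i 0 != 0)) => [i xi | x0].
    by exists i.
  by case: x_neq0; apply/colP => i; rewrite mxE; apply/eqP/negPn; rewrite x0.
move=> /entry_neq0[i vi] /entry_neq0[j wj].
apply/eqP => /matrixP/(_ (mxvec_index i j) (mxvec_index 0 0))/eqP.
by rewrite kronE mxE mulf_eq0 (negbTE vi) (negbTE wj).
Qed.

End Kronecker.

Section ExtremalVectors.
Variables (F : fieldType) (q : F).
Hypotheses (q_neq0 : q != 0) (q2_neq1 : q ^+ 2 != 1).

Lemma qq1_neq0 : q * q - 1 != 0.
Proof. by rewrite subr_eq0 -expr2. Qed.

Lemma qdiff_neq0 : q - q^-1 != 0.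
Proof.
apply: contraNneq qq1_neq0 => /eqP; rewrite subr_eq0 => /eqP E.
by rewrite {2}E mulfV ?subrr.
Qed.

Definition qint (k : nat) : F := (q ^+ k - q ^- k) / (q - q^-1).

Lemma qint0 : qint 0 = 0.
Proof. by rewrite /qint expr0 invr1 subrr mul0r. Qed.

Lemma qint1 : qint 1 = 1.
Proof. by rewrite /qint expr1 divff ?qdiff_neq0. Qed.

Record extremal n (M : umod F n) (v : 'cV[F]_n) (k : nat) (P T : F) : Prop :=
  Extremal {
  ext_K0 : K0 M *m v = q ^- k *: v;
  ext_K1 : K1 M *m v = q ^+ k *: v;
  ext_K0i : K0i M *m v = q ^+ k *: v;
  ext_K1i : K1i M *m v = q ^- k *: v;
  ext_E1p : E1p M *m v = 0;
  ext_E0m : E0m M *m v = 0;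
  ext_E1pE0p : E1p M *m (E0p M *m v) = P *: v;
  ext_E1pE1m : E1p M *m (E1m M *m v) = qint k *: v;
  ext_E0mE0p : E0m M *m (E0p M *m v) = qint k *: v;
  ext_E0mE1m : E0m M *m (E1m M *m v) = T *: v;
  ext_K0E0p : K0 M *m (E0p M *m v) = (q ^+ 2 / q ^+ k) *: (E0p M *m v);
  ext_K0E1m : K0 M *m (E1m M *m v) = (q ^+ 2 / q ^+ k) *: (E1m M *m v) }.

Lemma extremal_triv : extremal (triv F) 1%:M 0 0 0.
Proof.
by split; rewrite /= ?qint0 ?mul1mx ?mul0mx ?expr0 ?invr1
  ?scale1r ?scale0r ?scaler0.
Qed.

(* Extremal vectors are stable under tensor product: weights and the
   parameters P, T add, while the q-integers satisfy
   [k + l] = q^l [k] + q^-k [l] = q^-l [k] + q^k [l]. *)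
Lemma extremal_tens m n (M : umod F m) (N : umod F n) v w k l P P' T T' :
  extremal M v k P T -> extremal N w l P' T' ->
  extremal (tens M N) (kron v w) (k + l) (P + P') (T + T').
Proof.
case=> [vK0 vK1 vK0i vK1i vE1p vE0m vP vQ vS vT vK0E0p vK0E1m].
case=> [wK0 wK1 wK0i wK1i wE1p wE0m wP wQ wS wT wK0E0p wK0E1m].
split; rewrite /tens /=;
  repeat progress rewrite ?mulmxDl ?mulmxDr ?kron_mulv ?mul1mx -?scalemxAr
    ?kronZl ?kronZr ?kronDl ?kronDr ?kron0l ?kron0r ?scaler0 ?addr0 ?add0r
    ?scalerA ?scalerDr ?scalerDl
    ?vK0 ?vK1 ?vK0i ?vK1i ?vE1p ?vE0m ?vP ?vQ ?vS ?vT ?vK0E0p ?vK0E1m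
    ?wK0 ?wK1 ?wK0i ?wK1i ?wE1p ?wE0m ?wP ?wQ ?wS ?wT ?wK0E0p ?wK0E1m.
all: rewrite -?scalerDl //; first [congr (_ *: _ + _ *: _) | congr (_ *: _)].
all: rewrite /qint ?exprD; field.
all: by rewrite ?q_neq0 ?qq1_neq0 ?expf_neq0.
Qed.

Lemma mx2_x2 (a b c e : F) : mx2 a b c e *m x2 F = a *: x2 F + c *: y2 F.
Proof.
apply/colP => i; rewrite !mxE big_ord_recl big_ord1 !mxE.
by case: i => [[|[|]]] //= _; rewrite ?mulr1 ?mulr0 ?addr0 ?add0r.
Qed.

Lemma mx2_y2 (a b c e : F) : mx2 a b c e *m y2 F = b *: x2 F + e *: y2 F.
Proof.
apply/colP => i; rewrite !mxE big_ord_recl big_ord1 !mxE.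
by case: i => [[|[|]]] //= _; rewrite ?mulr1 ?mulr0 ?addr0 ?add0r.
Qed.

Lemma extremal_Valpha a : a != 0 ->
  extremal (Valpha q a) (x2 F) 1 (q^-1 * a) (q * a^-1).
Proof.
move=> a_neq0; split; rewrite /Valpha /= ?qint1;
  repeat progress rewrite ?mx2_x2 ?mx2_y2 ?mulmxDr -?scalemxAr ?scale0r ?scaler0
    ?addr0 ?add0r ?scalerA.
all: rewrite ?expr1 //; congr (_ *: _); field.
all: by rewrite ?q_neq0 ?a_neq0.
Qed.

(* The diagram automorphism of U_q(sl2^) exchanging the indices 0 and 1,
   acting on modules by relabelling the generators. *)
Definition swap01 n (M : umod F n) : umod F n :=
  UMod (E1p M) (E1m M) (E0p M) (E0m M) (K1 M) (K0 M) (K1i M) (K0i M).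

Lemma extremal_swap_Valpha a : a != 0 ->
  extremal (swap01 (Valpha q a)) (y2 F) 1 (q^-1 * a) (q * a^-1).
Proof.
move=> a_neq0; split; rewrite /Valpha /= ?qint1;
  repeat progress rewrite ?mx2_x2 ?mx2_y2 ?mulmxDr -?scalemxAr ?scale0r ?scaler0
    ?addr0 ?add0r ?scalerA.
all: rewrite ?expr1 //; congr (_ *: _); field.
all: by rewrite ?q_neq0 ?a_neq0.
Qed.

Definition lr_value (k : nat) (P T a b c e : F) : F :=
  a * c * P + a * e * q ^+ k * qint k + b * c * (q ^+ 2 / q ^+ k) * qint k
  + b * e * q ^+ 2 * T.

Lemma extremal_LR n (M : umod F n) v k P T a b c e :
  extremal M v k P T ->
  (Lop M a b *m Rop M c e) *m v = lr_value k P T a b c e *: v.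
Proof.
case=> [vK0 vK1 _ _ vE1p vE0m vP vQ vS vT vK0E0p vK0E1m].
rewrite /Rop /Lop -mulmxA.
repeat progress rewrite ?mulmxDl ?mulmxDr -?scalemxAr -?scalemxAl -?mulmxA
  ?scalerA ?scalerDr ?vK0 ?vK1 ?vE1p ?vE0m ?vP ?vQ ?vS ?vT ?vK0E0p ?vK0E1m
  ?mulmx0 ?scaler0 ?addr0 ?add0r.
rewrite -!scalerDl /lr_value; congr (_ *: _); field.
by rewrite expf_neq0.
Qed.

(* Under the constraints a e = -C q^-1 (q - q^-1)^2, b c = -B q^-1 (q - q^-1)^2
   the eigenvalue on an extremal vector of weight d >= 1 with P = q^-1 SA and
   T = q SB takes the closed form of the paper; for LR on x (x) ... (x) x one
   has (a, b, c, e) = (u*, v*, u, v), so C = c c* and B = b b*, while for RL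
   on y (x) ... (x) y the roles are exchanged. *)
Lemma lr_value_closed d (SA SB a b c e B C : F) : (1 <= d)%N ->
  a * e = - (C * q^-1 * (q - q^-1) ^+ 2) ->
  b * c = - (B * q^-1 * (q - q^-1) ^+ 2) ->
  lr_value d (q^-1 * SA) (q * SB) a b c e =
  a * c * q^-1 * SA + b * e * q ^+ 3 * SB
  - (q - q^-1) * (q ^+ d - q ^- d) * (B * q ^- d.-1 + C * q ^+ d.-1).
Proof.
case: d => // d _ ae bc; rewrite /lr_value ae bc /qint !(exprS q d) /=; field.
by rewrite q_neq0 qq1_neq0 expf_neq0.
Qed.

End ExtremalVectors.

Lemma scalerIv (F : fieldType) n (x : 'cV[F]_n) a b :
  x != 0 -> a *: x = b *: x -> a = b.
Proof.
move=> x_neq0 /eqP; rewrite -subr_eq0 -scalerBl scaler_eq0 (negbTE x_neq0) orbF.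
by rewrite subr_eq0 => /eqP.
Qed.

Section StandardModule.
Variables (F : fieldType) (q : F) (alpha : nat -> F).
Hypotheses (q_neq0 : q != 0) (q2_neq1 : q ^+ 2 != 1).

Definition twist (s : bool) n (M : umod F n) : umod F n :=
  if s then swap01 M else M.

Definition pure_vec (s : bool) (d : nat) : 'cV[F]_(dimV d) :=
  if s then yvec F d else xvec F d.

Lemma pure_vec_neq0 s d : pure_vec s d != 0.
Proof.
have x2_neq0 : x2 F != 0.
  by apply/eqP => /colP/(_ 0)/eqP; rewrite !mxE oner_eq0.
have y2_neq0 : y2 F != 0.
  by apply/eqP => /colP/(_ 1)/eqP; rewrite !mxE oner_eq0.
case: s; elim: d => [|d IH] /=; rewrite ?oner_neq0 //; exact: kron_neq0.
Qed.

Lemma extremal_stdmod s d :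
  (forall i, (1 <= i <= d)%N -> alpha i != 0) ->
  extremal q (twist s (stdmod q alpha d)) (pure_vec s d) d
    (q^-1 * \sum_(1 <= i < d.+1) alpha i) (q * \sum_(1 <= i < d.+1) (alpha i)^-1).
Proof.
have twist_tens m n (M : umod F m) (N : umod F n) :
  twist s (tens M N) = tens (twist s M) (twist s N) by case: (s).
have pure_vec_S k :
  pure_vec s k.+1 = kron (pure_vec s k) (if s then y2 F else x2 F) by case: (s).
have extremal_factor a : a != 0 ->
    extremal q (twist s (Valpha q a)) (if s then y2 F else x2 F) 1
      (q^-1 * a) (q * a^-1).
  by case: (s); [exact: extremal_swap_Valpha | exact: extremal_Valpha].
elim: d => [|d IH] alpha_neq0.
  by rewrite !big_geq // !mulr0; case: (s); exact: extremal_triv.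
rewrite /= twist_tens pure_vec_S -[X in extremal _ _ _ X]addn1.
rewrite !(big_nat_recr d.+1) // !mulrDr.
apply: (extremal_tens q_neq0 q2_neq1).
  by apply: IH => i /andP[i_ge1 i_le]; rewrite alpha_neq0 // i_ge1 ltnW.
by apply/extremal_factor/alpha_neq0; rewrite leqnn.
Qed.

End StandardModule.

Theorem lemma7p17 (F : closedFieldType) (q : F) (d : nat) (alpha : nat -> F)
    (b c bs cs u v us vs : F) :
  q != 0 -> q ^+ 2 != 1 ->
  (* d feasible, d >= 1 *)
  (1 <= d)%N -> (forall i : nat, (1 <= i <= d)%N -> q ^+ (2 * i) != 1) ->
  (forall i : nat, (1 <= i <= d)%N -> alpha i != 0) ->
  b != 0 -> c != 0 -> bs != 0 -> cs != 0 ->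
  u * vs = - b * bs * q^-1 * (q - q^-1) ^+ 2 ->
  v * us = - c * cs * q^-1 * (q - q^-1) ^+ 2 ->
  let V := stdmod q alpha d in
  let R := Rop V u v in
  let L := Lop V us vs in
  (exists z, (L *m R) *m xvec F d = z *: xvec F d) /\
  (exists z, (R *m L) *m yvec F d = z *: yvec F d) /\
  forall z1 z1x : F,
    (L *m R) *m xvec F d = z1 *: xvec F d ->
    (R *m L) *m yvec F d = z1x *: yvec F d ->
    [/\ z1 = u * us * q^-1 * (\sum_(1 <= i < d.+1) alpha i)
             + v * vs * q ^+ 3 * (\sum_(1 <= i < d.+1) (alpha i)^-1)
             - (q - q^-1) * (q ^+ d - q ^- d) * (b * bs * q ^- d.-1 + c * cs * q ^+ d.-1),
        z1x = u * us * q^-1 * (\sum_(1 <= i < d.+1) alpha i)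
             + v * vs * q ^+ 3 * (\sum_(1 <= i < d.+1) (alpha i)^-1)
             - (q - q^-1) * (q ^+ d - q ^- d) * (b * bs * q ^+ d.-1 + c * cs * q ^- d.-1)
      & z1 - z1x = (q - q^-1) * (q ^+ d.-1 - q ^- d.-1) * (q ^+ d - q ^- d) * (b * bs - c * cs)].
Proof.
move=> q_neq0 q2_neq1 d_ge1 _ alpha_neq0 _ _ _ _ uvs vus V R L.
have [Xext Yext] := (extremal_stdmod q_neq0 q2_neq1 false alpha_neq0,
                    extremal_stdmod q_neq0 q2_neq1 true alpha_neq0).
(* In the swapped module R and L exchange roles, so RL there is an L R. *)
have LRx := extremal_LR q_neq0 us vs u v Xext.
have RLy := extremal_LR q_neq0 u v us vs Yext.
split; first by eexists; exact: LRx.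
split; first by eexists; exact: RLy.
move=> z1 z1x LRz1 RLz1x.
rewrite !mulNr in uvs vus.
have -> := scalerIv (pure_vec_neq0 F false d) (etrans (esym LRz1) LRx).
have -> := scalerIv (pure_vec_neq0 F true d) (etrans (esym RLz1x) RLy).
rewrite (lr_value_closed q_neq0 q2_neq1 _ _ d_ge1
           (etrans (mulrC us v) vus) (etrans (mulrC vs u) uvs)).
rewrite (lr_value_closed q_neq0 q2_neq1 _ _ d_ge1 uvs vus).
split; ring.
Qed.
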